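(* Let $\mathcal{F}=(W,R,S)$ be any simplified $\mathbf{IL}^-(\mathbf{J4}_{+})$-frame. Then: (1) $\mathcal{F}\models \mathbf{J3}$, i.e. $\mathcal{F}\models (A\rhd C)\land(B\rhd C)\to(A\lor B)\rhd C$ for all formulas $A,B,C$; (2) $\mathcal{F}\models \mathbf{J4}_{+}$, i.e. $\mathcal{F}\models \Box(A\to B)\to(C\rhd A\to C\rhd B)$ for all formulas $A,B,C$; (3) $\mathcal{F}\models \mathbf{J6}$, i.e. $\mathcal{F}\models \Box\lnot A\leftrightarrow A\rhd\bot$ for all formulas $A$; (4) $\mathcal{F}\models \Box(A\to B)\to A\rhd B$ for all formulas $A,B$ if and only if $(\forall x,y\in W)(xRy\Rightarrow ySy)$; (5) $\mathcal{F}\models A\rhd(B\lor C)\land B\rhd C\to A\rhd C$ for all formulas $A,B,C$ if and only if for every $x\in W$ and all $y,z,v\in R[x]$, if $ySz$ and $zSv$ then $ySv$ (where $R[x]=\{y\in W: xRy\}$); (6) $\mathcal{F}\models \Diamond A\rhd A$ for all formulas $A$ if and only if $(\forall x,y,z\in W)(xRy \,\&\, yRz\Rightarrow ySz)$.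
   Context: Modal formulas of interpretability logic are built from propositional variables, $\top$, $\bot$ using $\to,\lor,\land$, the unary operator $\Box$ and the binary operator $\rhd$; $\lnot A$ abbreviates $A\to\bot$ and $\Diamond A:=\lnot\Box\lnot A$. A simplified $\mathbf{IL}^-(\mathbf{J4}_{+})$-frame is a triple $(W,R,S)$ where $W$ is a non-empty set, $R$ is a transitive and conversely well-founded binary relation on $W$, and $S$ is an arbitrary binary relation on $W$. A model on it is given by a forcing relation $\Vdash$ between $W$ and formulas, arbitrary on propositional variables, with the usual Boolean clauses, $x\Vdash\Box A$ iff for all $y$ with $xRy$, $y\Vdash A$, and $x\Vdash A\rhd B$ iff for every $y\in W$ with $xRy$ and $y\Vdash A$ there is $z\in W$ with $xRz$, $ySz$ and $z\Vdash B$. A formula $A$ is valid in the frame ($\mathcal{F}\models A$) if $x\Vdash A$ for every such forcing relation and every $x\in W$. *)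

From Stdlib Require Import Relations.

Inductive formula : Type :=
| fvar : nat -> formula
| ftop : formula
| fbot : formula
| fimp : formula -> formula -> formula
| for_ : formula -> formula -> formula
| fand : formula -> formula -> formula
| fbox : formula -> formula
| frhd : formula -> formula -> formula.

Definition fneg (A : formula) : formula := fimp A fbot.
Definition fdia (A : formula) : formula := fneg (fbox (fneg A)).
Definition fiff (A B : formula) : formula := fand (fimp A B) (fimp B A).

(* A simplified IL^-(J4_+)-frame: W non-empty, R transitive and conversely
   well-founded (no infinite ascending chains x0 R x1 R x2 ...), S arbitrary. *)
Definition simplified_frame (W : Type) (R S : W -> W -> Prop) : Prop :=
  inhabited W /\ transitive W R /\ well_founded (fun y x => R x y).

Fixpoint forces {W : Type} (R S : W -> W -> Prop) (V : nat -> W -> Prop)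
  (x : W) (A : formula) : Prop :=
  match A with
  | fvar p => V p x
  | ftop => True
  | fbot => False
  | fimp A B => forces R S V x A -> forces R S V x B
  | for_ A B => forces R S V x A \/ forces R S V x B
  | fand A B => forces R S V x A /\ forces R S V x B
  | fbox A => forall y, R x y -> forces R S V y A
  | frhd A B => forall y, R x y -> forces R S V y A ->
                  exists z, R x z /\ S y z /\ forces R S V z B
  end.

Definition valid {W : Type} (R S : W -> W -> Prop) (A : formula) : Prop :=
  forall (V : nat -> W -> Prop) (x : W), forces R S V x A.

(* For J1, J2_+ and J5, the frame condition gives validity
   directly (for J5 via transitivity of R, which puts the witness of the
   diamond into R[x]); conversely, a valuation making each propositional
   variable true at exactly one chosen world turns a forced instance of
   the axiom into the required S-edge. *)
From Stdlib Require Import Classical Relations.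

Section Frame.

Context {W : Type} (R S : W -> W -> Prop).

Definition point_valuation (f : nat -> W) : nat -> W -> Prop :=
  fun n w => w = f n.

Lemma forces_dia_witness (V : nat -> W -> Prop) (x : W) (A : formula) :
  forces R S V x (fdia A) -> exists y, R x y /\ forces R S V y A.
Proof.
  intros Hdia. apply NNPP. intros Hnone. apply Hdia.
  intros y Hxy HA. apply Hnone. exists y. split; assumption.
Qed.

Lemma valid_J3 (A B C : formula) :
  valid R S (fimp (fand (frhd A C) (frhd B C)) (frhd (for_ A B) C)).
Proof.
  intros V x [HAC HBC] y Hxy [HA | HB].
  - exact (HAC y Hxy HA).
  - exact (HBC y Hxy HB).
Qed.

Lemma valid_J4plus (A B C : formula) :
  valid R S (fimp (fbox (fimp A B)) (fimp (frhd C A) (frhd C B))).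
Proof.
  intros V x HAB HCA y Hxy HC.
  destruct (HCA y Hxy HC) as [z [Hxz [Hyz HA]]].
  exists z. split; [assumption | split; [assumption | exact (HAB z Hxz HA)]].
Qed.

Lemma valid_J6 (A : formula) : valid R S (fiff (fbox (fneg A)) (frhd A fbot)).
Proof.
  intros V x. split.
  - intros HnA y Hxy HA. contradiction (HnA y Hxy HA).
  - intros Hbot y Hxy HA. destruct (Hbot y Hxy HA) as [z [_ [_ []]]].
Qed.

Lemma valid_J1_iff :
  (forall A B : formula, valid R S (fimp (fbox (fimp A B)) (frhd A B))) <->
  (forall x y : W, R x y -> S y y).
Proof.
  split.
  - intros HJ1 x y Hxy.
    destruct (HJ1 (fvar 0) (fvar 0) (point_valuation (fun _ => y)) x
                (fun _ _ H => H) y Hxy eq_refl) as [z [_ [Hyz ->]]].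
    exact Hyz.
  - intros Hrefl A B V x HAB y Hxy HA.
    exists y. split; [assumption | split; [exact (Hrefl x y Hxy) | exact (HAB y Hxy HA)]].
Qed.

Lemma valid_J2plus_iff :
  (forall A B C : formula,
      valid R S (fimp (fand (frhd A (for_ B C)) (frhd B C)) (frhd A C))) <->
  (forall x y z v : W, R x y -> R x z -> R x v -> S y z -> S z v -> S y v).
Proof.
  split.
  - intros HJ2 x y z v Hxy Hxz Hxv Hyz Hzv.
    set (f := fun n => match n with 0 => y | 1 => z | _ => v end).
    assert (HAB : forces R S (point_valuation f) x
                    (frhd (fvar 0) (for_ (fvar 1) (fvar 2)))).
    { intros w _ Hw. hnf in Hw. subst w.
      exists z. split; [assumption | split; [assumption | left; reflexivity]]. }
    assert (HBC : forces R S (point_valuation f) x (frhd (fvar 1) (fvar 2))).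
    { intros w _ Hw. hnf in Hw. subst w.
      exists v. split; [assumption | split; [assumption | reflexivity]]. }
    destruct (HJ2 (fvar 0) (fvar 1) (fvar 2) (point_valuation f) x
                (conj HAB HBC) y Hxy eq_refl) as [w [_ [Hyw ->]]].
    exact Hyw.
  - intros Htrans A B C V x [HABC HBC] y Hxy HA.
    destruct (HABC y Hxy HA) as [z [Hxz [Hyz [HB | HC]]]].
    + destruct (HBC z Hxz HB) as [v [Hxv [Hzv HCv]]].
      exists v. split; [assumption | split; [| assumption]].
      exact (Htrans x y z v Hxy Hxz Hxv Hyz Hzv).
    + exists z. split; [| split]; assumption.
Qed.

Lemma valid_J5_iff :
  transitive W R ->
  (forall A : formula, valid R S (frhd (fdia A) A)) <->
  (forall x y z : W, R x y -> R y z -> S y z).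
Proof.
  intros HRtrans. split.
  - intros HJ5 x y z Hxy Hyz.
    assert (Hdia : forces R S (point_valuation (fun _ => z)) y (fdia (fvar 0))).
    { intros Hnot. exact (Hnot z Hyz eq_refl). }
    destruct (HJ5 (fvar 0) (point_valuation (fun _ => z)) x y Hxy Hdia)
      as [w [_ [Hyw ->]]].
    exact Hyw.
  - intros HRS A V x y Hxy Hdia.
    destruct (forces_dia_witness V y A Hdia) as [z [Hyz HA]].
    exists z. split; [exact (HRtrans x y z Hxy Hyz) | split; [| exact HA]].
    exact (HRS x y z Hxy Hyz).
Qed.

End Frame.

Theorem proposition2p13 (W : Type) (R S : W -> W -> Prop) :
  simplified_frame W R S ->
  (* (1) J3 *)
  (forall A B C : formula,
     valid R S (fimp (fand (frhd A C) (frhd B C)) (frhd (for_ A B) C))) /\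
  (* (2) J4_+ *)
  (forall A B C : formula,
     valid R S (fimp (fbox (fimp A B)) (fimp (frhd C A) (frhd C B)))) /\
  (* (3) J6 *)
  (forall A : formula, valid R S (fiff (fbox (fneg A)) (frhd A fbot))) /\
  (* (4) *)
  ((forall A B : formula, valid R S (fimp (fbox (fimp A B)) (frhd A B))) <->
   (forall x y : W, R x y -> S y y)) /\
  (* (5) *)
  ((forall A B C : formula,
      valid R S (fimp (fand (frhd A (for_ B C)) (frhd B C)) (frhd A C))) <->
   (forall x y z v : W, R x y -> R x z -> R x v -> S y z -> S z v -> S y v)) /\
  (* (6) *)
  ((forall A : formula, valid R S (frhd (fdia A) A)) <->
   (forall x y z : W, R x y -> R y z -> S y z)).
Proof.
  intros [_ [HRtrans _]].
  exact (conj (valid_J3 R S) (conj (valid_J4plus R S) (conj (valid_J6 R S)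
           (conj (valid_J1_iff R S) (conj (valid_J2plus_iff R S)
                 (valid_J5_iff R S HRtrans)))))).
Qed.
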